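(* Consider $2$ agents with additive, identical, normalized valuations, and online algorithms that have no access to predictions. For any given $a \in (\varphi - 1, 1]$, where $\varphi = \frac{1+\sqrt{5}}{2}$, there is no online algorithm that guarantees an $a$-EFX allocation, even if the time horizon $T$ is known to the algorithm in advance.
   Context: Online fair division model: there is a set $N=[n]$ of agents and goods $g_1,\dots,g_T$ that arrive one per time step $t=1,\dots,T$. Each agent $i$ has an additive normalized valuation $v_i$: $v_i(g_t)\ge 0$, $\sum_{t=1}^T v_i(g_t)=1$, and $v_i(S)=\sum_{g\in S} v_i(g)$. Valuations are identical if $v_i=v$ for all agents. When good $g_t$ arrives, its true values $v_i(g_t)$ for all agents are revealed and the algorithm must immediately and irrevocably allocate $g_t$ to one agent. An allocation $A=(A_1,\dots,A_n)$ is a partition of the goods. For a bundle $S\neq\emptyset$ and valuation $f$, let $\bar S^f = S\setminus\{g\}$ where $g\in\arg\max_{g'\in S} f(S\setminus\{g'\})$ (i.e. a least valuable good is removed), and $\bar\emptyset^f=\emptyset$. For $a\in[0,1]$, the allocation is $a$-EFX (with respect to valuations $f_i$) if $f_i(A_i)\ge a\cdot f_i(\bar{A_j}^{f_i})$ for all agents $i,j$. An algorithm guarantees an $a$-EFX allocation if, for every admissible input sequence, the final allocation after all goods have arrived is $a$-EFX with respect to the true valuations. *)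

From HB Require Import structures.
From mathcomp Require Import all_boot all_order all_algebra.
From mathcomp Require Import reals.
Set Implicit Arguments. Unset Strict Implicit. Unset Printing Implicit Defensive.
Import Order.TTheory GRing.Theory Num.Theory.
Local Open Scope ring_scope.

(* Goods g_1..g_T are indexed by t : 'I_T (t = 0 is the first good).
   Agents are 'I_2.  Identical valuations: a single v : 'I_T -> R. *)

Definition bval (R : realType) (T : nat) (v : 'I_T -> R) (S : {set 'I_T}) : R :=
  \sum_(g in S) v g.

Definition normalized (R : realType) (T : nat) (v : 'I_T -> R) : Prop :=
  (forall t, 0 <= v t) /\ \sum_(t < T) v t = 1.

(* \bar S^f : S minus a good g maximizing f(S \ g) ; empty stays empty *)
Definition bar (R : realType) (T : nat) (f : {set 'I_T} -> R) (S : {set 'I_T})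
  : {set 'I_T} :=
  if [pick g in S | [forall g' in S, f (S :\ g') <= f (S :\ g)]] is Some g
  then S :\ g else set0.

Definition aEFX (R : realType) (T : nat) (a : R) (f : 'I_2 -> {set 'I_T} -> R)
  (A : 'I_2 -> {set 'I_T}) : Prop :=
  forall i j : 'I_2, f i (A i) >= a * f i (bar (f i) (A j)).

(* A deterministic online algorithm for 2 agents with identical valuations that
   knows the horizon T: given T and the sequence of revealed values of the goods
   g_1..g_t (the current good last), it returns the agent receiving g_t.
   (Past allocation decisions are a function of the same data, so they need not
   be passed explicitly.) *)
Definition online_alg (R : realType) := nat -> seq R -> 'I_2.

Definition history (R : realType) (T : nat) (v : 'I_T -> R) (t : 'I_T) : seq R :=
  [seq v j | j : 'I_T <- [seq j <- enum 'I_T | (nat_of_ord j <= nat_of_ord t)%N]].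

Definition run (R : realType) (alg : online_alg R) (T : nat) (v : 'I_T -> R)
  : 'I_2 -> {set 'I_T} :=
  fun i => [set t | alg T (history v t) == i].

From HB Require Import structures.
From mathcomp Require Import all_boot all_order all_algebra.
From mathcomp Require Import reals.
From mathcomp Require Import lra.
Import Order.TTheory GRing.Theory Num.Theory.
Local Open Scope ring_scope.

(* The adversary first sends a worthless good and then a good of value x, and
   branches on whether the algorithm gave both to the same agent.  If it did,
   two goods of value y follow: if the other agent gets both, the first one
   holds x against y; otherwise the other agent holds at most y against x + y.
   If it did not, a worthless good and a good of value 2y follow, and whoever
   misses the good 2y holds at most x against 2y.  Wherever EFX discards the
   worthless first good, the envied bundle loses nothing.  Each outcome
   breaks a-EFX as soon as x < a y and y < a (x + y); with x + 2y = 1 such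
   weights exist exactly when a^2 + a > 1, i.e. a > phi - 1. *)

Lemma bar_maximal {R : realType} {T : nat} (f : {set 'I_T} -> R)
    {S : {set 'I_T}} {g : 'I_T} :
  g \in S -> f (S :\ g) <= f (bar f S).
Proof.
move=> gS; rewrite /bar; case: pickP => [g0 /andP[_ /forallP g0_max] | no_max].
  by have /implyP := g0_max g; apply.
have [g1 g1S g1_max] := @arg_maxP _ _ _ g [in S] (fun h => f (S :\ h)) gS.
have /negP[] := no_max g1; rewrite g1S /=.
by apply/forallP => h; apply/implyP; apply: g1_max.
Qed.

Lemma not_aEFX_of_envy {R : realType} {T : nat} {a : R}
    {f : {set 'I_T} -> R} {A : 'I_2 -> {set 'I_T}} (i j : 'I_2) (g : 'I_T) :
  0 <= a -> g \in A j -> f (A i) < a * f (A j :\ g) ->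
  ~ aEFX a (fun _ => f) A.
Proof.
move=> a_ge0 gAj envy /(_ i j); apply/negP; rewrite -ltNge.
by rewrite (lt_le_trans envy) // ler_wpM2l // bar_maximal.
Qed.

Lemma eq_aEFX {R : realType} {T : nat} {a : R} {f : 'I_2 -> {set 'I_T} -> R}
    {A B : 'I_2 -> {set 'I_T}} :
  A =1 B -> aEFX a f A -> aEFX a f B.
Proof. by move=> eqAB efxA i j; rewrite -!eqAB. Qed.

Lemma bvalE {R : realType} {T : nat} (v : 'I_T -> R) (S : {set 'I_T}) :
  bval v S = \sum_(t < T) (if t \in S then v t else 0).
Proof. exact: big_mkcond. Qed.

Lemma ord2_cases {i j : 'I_2} : i != j -> forall k : 'I_2, k = i \/ k = j.
Proof.
case: i j => [[|[|//]] ?] [[|[|//]] ?] //= _ k; case: k => [[|[|//]] ?] //=;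
  [left | right | right | left]; exact: val_inj.
Qed.

Definition seq_val {R : realType} (T : nat) (s : seq R) : 'I_T -> R :=
  fun t => nth 0 s t.

Definition seq_alloc (T : nat) (os : seq 'I_2) : 'I_2 -> {set 'I_T} :=
  fun i => [set t : 'I_T | nth ord0 os t == i].

Lemma seq_val_normalized {R : realType} {T : nat} (s : seq R) :
  size s = T -> all (fun r => 0 <= r) s -> \sum_(r <- s) r = 1 ->
  normalized (seq_val T s).
Proof.
move=> sizeT /allP s_ge0 s_sum1; split=> [t | ].
  rewrite /seq_val; case: (ltnP t (size s)) => [/(mem_nth 0)/s_ge0 // | ].
  by move/(nth_default 0)->.
by rewrite -s_sum1 (big_nth 0) big_mkord sizeT.
Qed.

Lemma history_seq_val {R : realType} {T : nat} (s : seq R) (t : 'I_T) :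
  size s = T -> history (seq_val T s) t = take t.+1 s.
Proof.
move=> sizeT; rewrite /history.
have -> : [seq seq_val T s j | j <- [seq j : 'I_T <- enum 'I_T | (j <= t)%N]]
    = [seq nth 0 s k
      | k <- [seq k <- [seq val j | j : 'I_T <- enum 'I_T] | (k <= t)%N]].
  by rewrite filter_map -map_comp.
by rewrite val_enum_ord (filter_iota_leq 0 (ltn_ord t)) map_nth_iota0 // sizeT.
Qed.

Lemma run_seq_val {R : realType} {T : nat} (alg : online_alg R) {s : seq R} :
  size s = T ->
  run alg (seq_val T s)
    =1 seq_alloc T [seq alg T (take t.+1 s) | t <- iota 0 T].
Proof.
move=> sizeT i; apply/setP => t.
by rewrite !inE (nth_map 0) ?size_iota // nth_iota // history_seq_val.
Qed.

(* Refutes a-EFX of an allocation of four goods by naming the envious agent [i],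
   the envied agent [j] and the good [g] removed from [j]'s bundle; [neq] says
   that the two agents differ, which settles the ownership tests. *)
Ltac envy neq i j g :=
  let neq' := fresh in
  have neq' := neq; rewrite eq_sym in neq';
  apply: (not_aEFX_of_envy i j g); [ lra
  | by rewrite inE /= ?eqxx
  | rewrite !bvalE !big_ord_recl !big_ord0 !inE /seq_val /= ?eqxx
            ?(negbTE neq) ?(negbTE neq') /=; lra ].

Lemma not_aEFX_same_owner {R : realType} {a x y : R} (i o2 o3 : 'I_2) :
  0 <= a -> 0 <= x -> 0 < y -> x < a * y -> y < a * (x + y) ->
  ~ aEFX a (fun _ => bval (seq_val 4 [:: 0; x; y; y]))
           (seq_alloc 4 [:: i; i; o2; o3]).
Proof.
move=> a_ge0 x_ge0 y_gt0 x_lt_ay y_lt_axy.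
have [j neq_ij] : exists j : 'I_2, i != j.
  by case: i => [[|[|//]] ?]; [exists ord_max | exists ord0].
have [->|->] := ord2_cases neq_ij o2; have [->|->] := ord2_cases neq_ij o3.
- envy neq_ij j i (@Ordinal 4 0 isT).
- envy neq_ij j i (@Ordinal 4 0 isT).
- envy neq_ij j i (@Ordinal 4 0 isT).
- envy neq_ij i j (@Ordinal 4 2 isT).
Qed.

Lemma not_aEFX_split_owners {R : realType} {a x y : R} (i j o2 o3 : 'I_2) :
  0 <= a -> 0 <= x -> x < a * y -> i != j ->
  ~ aEFX a (fun _ => bval (seq_val 4 [:: 0; x; 0; 2 * y]))
           (seq_alloc 4 [:: i; j; o2; o3]).
Proof.
move=> a_ge0 x_ge0 x_lt_ay neq_ij.
have [->|->] := ord2_cases neq_ij o3; have [->|->] := ord2_cases neq_ij o2.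
- envy neq_ij j i (@Ordinal 4 0 isT).
- envy neq_ij j i (@Ordinal 4 0 isT).
- envy neq_ij i j (@Ordinal 4 1 isT).
- envy neq_ij i j (@Ordinal 4 1 isT).
Qed.

Lemma online_adversary {R : realType} {a x y : R} (alg : online_alg R) :
  0 <= a -> 0 <= x -> 0 < y -> x + 2 * y = 1 ->
  x < a * y -> y < a * (x + y) ->
  exists (T : nat) (v : 'I_T -> R),
    normalized v /\ ~ aEFX a (fun _ : 'I_2 => bval v) (run alg v).
Proof.
move=> a_ge0 x_ge0 y_gt0 sum1 x_lt_ay y_lt_axy.
have [same | diff] := eqVneq (alg 4 [:: 0]) (alg 4 [:: 0; x]).
- exists 4, (seq_val 4 [:: 0; x; y; y]); split.
    apply: seq_val_normalized => //=; last by rewrite !big_cons big_nil; lra.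
    by rewrite lexx x_ge0 ltW.
  have run_eq := run_seq_val alg (erefl : size [:: 0; x; y; y] = 4).
  apply: contra_not (eq_aEFX run_eq) _.
  by rewrite /= -same; apply: not_aEFX_same_owner.
- exists 4, (seq_val 4 [:: 0; x; 0; 2 * y]); split.
    apply: seq_val_normalized => //=; last by rewrite !big_cons big_nil; lra.
    by rewrite lexx x_ge0 mulr_ge0 // ltW.
  have run_eq := run_seq_val alg (erefl : size [:: 0; x; 0; 2 * y] = 4).
  apply: contra_not (eq_aEFX run_eq) _.
  exact: not_aEFX_split_owners.
Qed.

(* The ratio x / y is the midpoint of the interval (1/a - 1, a). *)
Lemma adversary_weights {R : realType} {a : R} :
  0 < a -> 1 < a * a + a ->
  exists x y : R,
    [/\ 0 <= x, 0 < y, x + 2 * y = 1, x < a * y & y < a * (x + y)].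
Proof.
move=> a_gt0 golden.
set s := 1 + 3 * a + a * a.
have s_gt0 : 0 < s by rewrite /s; nra.
exists ((1 - a + a * a) / s), (2 * a / s); split.
- by rewrite divr_ge0 ?(ltW s_gt0) //; nra.
- by rewrite divr_gt0 //; lra.
- by rewrite mulrA -mulrDl (_ : _ + _ = s) ?divff ?gt_eqF // /s; lra.
- by rewrite mulrA ltr_pM2r ?invr_gt0 //; nra.
- by rewrite -mulrDl mulrA ltr_pM2r ?invr_gt0 //; nra.
Qed.

Lemma gt_golden_root {R : realType} {a : R} :
  (Num.sqrt 5 - 1) / 2 < a -> 0 < a /\ 1 < a * a + a.
Proof.
have sqrt5_ge0 : 0 <= Num.sqrt 5 :> R by rewrite sqrtr_ge0.
have sqrt5_sq : Num.sqrt 5 * Num.sqrt 5 = 5 :> R by rewrite -expr2 sqr_sqrtr.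
by rewrite ltr_pdivrMr // => lt_a; split; nra.
Qed.

Theorem theorem3p1 (R : realType) (a : R) :
  (Num.sqrt 5 - 1) / 2 < a -> a <= 1 ->
  forall alg : online_alg R,
  exists (T : nat) (v : 'I_T -> R),
    normalized v /\ ~ aEFX a (fun _ : 'I_2 => bval v) (run alg v).
Proof.
move=> /gt_golden_root[a_gt0 golden] _ alg.
have [x [y [x_ge0 y_gt0 sum1 x_lt_ay y_lt_axy]]] :=
  adversary_weights a_gt0 golden.
exact: online_adversary (ltW a_gt0) x_ge0 y_gt0 sum1 x_lt_ay y_lt_axy.
Qed.
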